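(* Let $p$ be a prime, $n\geq 0$, $C_{p^n}$ cyclic of order $p^n$ with generator $c$, and for $i\ge0$ let $\zeta_{p^i}$ be a primitive $p^i$th root of unity. Consider the absolute Wedderburn embedding \[ \omega_{\mathbb{Z},p^n}\colon\mathbb{Z}C_{p^n}\to\prod_{i\in[0,n]}\mathbb{Z}[\zeta_{p^i}],\qquad c\mapsto(\zeta_{p^i})_{i\in[0,n]}. \] Every element of $\prod_{i\in[0,n]}\mathbb{Z}[\zeta_{p^i}]$ is uniquely of the form $\bigl(\sum_{j\in[0,\phi(p^i)-1]}x_{i,j}\zeta_{p^i}^j\bigr)_{i\in[0,n]}$ with $x_{i,j}\in\mathbb{Z}$. Such an element lies in the image of $\omega_{\mathbb{Z},p^n}$ if and only if for all $l\in[1,n]$ and all $j\in[0,\phi(p^{n-l})-1]$, \[ x_{n-l,j}\equiv\sum_{i\in[0,l-1]}p^{\,l-1-i}\sum_{k\in[1,p-1]}\Bigl(x_{n-i,\;j-p^{n-l}+kp^{n-1-i}}-(1-\delta_{l,n})\,x_{n-i,\;[j]_{p^{n-l-1}}-p^{n-l-1}+kp^{n-1-i}}\Bigr)\pmod{p^l}. \] Moreover, the elementary divisors of $\omega_{\mathbb{Z},p^n}$ over $\mathbb{Z}$ are $p^i$ with multiplicity $\phi(p^{n-i})$, for $i\in[0,n]$.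
   Context: $\phi$ is Euler's function; $\delta$ is the Kronecker delta; for $k\ge1$ and $j\in\mathbb{Z}$, $[j]_k\in[0,k-1]$ denotes the residue with $[j]_k\equiv j \pmod k$ (the term with $1-\delta_{l,n}$ is absent when $l=n$). All indices occurring in the congruence lie in the allowed ranges $[0,\phi(p^{n-i})-1]$. $[a,b]=\{x\in\mathbb{Z}:a\le x\le b\}$. *)

From mathcomp Require Import all_boot all_order all_algebra all_field.
Set Implicit Arguments. Unset Strict Implicit. Unset Printing Implicit Defensive.
Import Order.TTheory GRing.Theory Num.Theory.
Local Open Scope ring_scope.

(* The element (sum_{j < phi(p^i)} x_{i,j} z_i^j)_{i in [0,n]} of
   prod_i Z[zeta_{p^i}], realised inside algC, lies in the image of the
   Wedderburn map Z C_{p^n} -> prod_i Z[zeta_{p^i}], c |-> (z_i)_i :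
   it is the image of some sum_{k < p^n} a_k c^k. *)
Definition in_wedderburn_image (p n : nat) (z : nat -> algC)
    (x : nat -> nat -> int) : Prop :=
  exists a : nat -> int, forall i, (i <= n)%N ->
    \sum_(k < p ^ n) (a k)%:~R * z i ^+ k
    = \sum_(j < totient (p ^ i)) (x i j)%:~R * z i ^+ j.

Definition wedd_rhs (p n : nat) (x : nat -> nat -> int) (l j : nat) : int :=
  \sum_(i < l) (p ^ (l - 1 - i))%:Z *
    \sum_(1 <= k < p)
      (x (n - i)%N ((j + k * p ^ (n - 1 - i)) - p ^ (n - l))%N
       - (if l == n then 0
          else x (n - i)%N ((j %% p ^ (n - l - 1) + k * p ^ (n - 1 - i))
                            - p ^ (n - l - 1))%N)).

(* M : 'M[int]_(p^n) is the matrix of the Wedderburn map in the Z-bases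
   (c^k)_{k < p^n} of Z C_{p^n} and (z_i^j)_{i <= n, j < phi(p^i)} of the
   product, the rows being indexed via the bijection e onto the pairs (i,j). *)
Definition wedderburn_matrix (p n : nat) (z : nat -> algC)
    (e : 'I_(p ^ n) -> nat * nat) (M : 'M[int]_(p ^ n)) : Prop :=
  [/\ injective e,
      (forall r, ((e r).1 <= n)%N /\ ((e r).2 < totient (p ^ (e r).1))%N),
      (forall i j, (i <= n)%N -> (j < totient (p ^ i))%N ->
          exists r, e r = (i, j)) &
      (forall (i : nat) (k : 'I_(p ^ n)), (i <= n)%N ->
          z i ^+ k = \sum_(r | (e r).1 == i) (M r k)%:~R * z i ^+ (e r).2)].

Definition smith_diagonal (m : nat) (M : 'M[int]_m) (d : seq int) : Prop :=
  size d = m /\ sorted dvdz d /\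
  exists2 L : 'M[int]_m, L \in unitmx &
  exists2 R : 'M[int]_m, R \in unitmx &
    M = L *m (\matrix_(i, j) (d`_i *+ (i == j :> nat))) *m R.

Definition expected_divisors (p n : nat) : seq int :=
  flatten [seq nseq (totient (p ^ (n - i))) (p ^ i)%:Z | i <- iota 0 n.+1].

Arguments in_wedderburn_image : clear implicits.
Arguments wedd_rhs : clear implicits.
Arguments wedderburn_matrix : clear implicits.
Arguments expected_divisors : clear implicits.

From mathcomp Require Import all_boot all_order all_algebra all_field.
From mathcomp Require Import zify ring.
Set Implicit Arguments. Unset Strict Implicit. Unset Printing Implicit Defensive.
Import Order.TTheory GRing.Theory Num.Theory.
Local Open Scope ring_scope.

(* The image of sum_k a_k c^k in Z[zeta_{p^u}] is computed in two steps: fold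
   the coefficients modulo p^u, then, for u = v + 1, eliminate the top p^v of
   them with 1 + w + ... + w^(p-1) = 0, where w = zeta^(p^v).  As the powers
   zeta^j, j < phi(p^u), are free over Z, this gives the coordinates of the
   image.  Folding to level u - 1 is summing the p fibres of level u, so the
   weighted sum in the congruence telescopes to x_{n-l,j} - p^l * y.
   Conversely, an x satisfying the congruences is reached level by level from
   the top: level s is corrected by p^(n-s) times a p^s-periodic element,
   whose image vanishes in the levels above s.  The p^i-periodic elements
   c^j (1 + c^(p^i) + c^(2 p^i) + ...) form a unitriangular basis of Z C_{p^n},
   and the Wedderburn map sends them to p^(n-i) times a unitriangular family,
   which gives the elementary divisors. *)

Lemma big_split_ord_mul (V : nmodType) (Q P : nat) (f : nat -> V) :
  \sum_(k < Q * P) f k = \sum_(q < Q) \sum_(m < P) f (m + q * P)%N.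
Proof.
elim: Q => [|Q IHQ]; first by rewrite mul0n !big_ord0.
rewrite mulSnr big_split_ord IHQ big_ord_recr /=.
by congr (_ + _); apply: eq_bigr => m _; rewrite addnC.
Qed.

Lemma modnDMl_small (m q d : nat) : (m < d)%N -> ((m + q * d) %% d = m)%N.
Proof. by move=> lt_md; rewrite addnC modnMDl modn_small. Qed.

Lemma totient_leq (n : nat) : (totient n <= n)%N.
Proof.
rewrite totient_count_coprime -[X in (_ <= X)%N]card_ord -sum1_card big_mkord.
by apply: leq_sum => d _; apply: leq_b1.
Qed.

Lemma totient1 : totient 1 = 1%N.
Proof. by []. Qed.

Lemma sum_expr_eq0 (R : idomainType) (w : R) (Q : nat) :
  w ^+ Q = 1 -> w != 1 -> \sum_(q < Q) w ^+ q = 0.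
Proof.
move=> wQ1 w_neq1; apply/eqP; move: (subrX1 w Q); rewrite wQ1 subrr.
by move/esym/eqP; rewrite mulf_eq0 subr_eq0 (negPf w_neq1).
Qed.

Lemma telescope_pow (R : comPzRingType) (c : R) (f : nat -> R) (l : nat) :
  \sum_(i < l) c ^+ (l - 1 - i) * (f i.+1 - c * f i) = f l - c ^+ l * f 0%N.
Proof.
elim: l => [|l IHl]; first by rewrite big_ord0 expr0 mul1r subrr.
rewrite big_ord_recr /= subSS subn0 subnn expr0 mul1r.
have -> : \sum_(i < l) c ^+ (l - i) * (f i.+1 - c * f i) =
          c * \sum_(i < l) c ^+ (l - 1 - i) * (f i.+1 - c * f i).
  rewrite mulr_sumr; apply: eq_bigr => i _; rewrite mulrA -exprS.
  by rewrite (_ : (l - i = (l - 1 - i).+1)%N) //; have := ltn_ord i; lia.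
by rewrite IHl exprS; ring.
Qed.

Lemma unitmx_unitrig (R : comUnitRingType) (m : nat) (A : 'M[R]_m) :
  is_trig_mx A -> (forall i, A i i = 1) -> A \in unitmx.
Proof. by move=> A_trig A_diag1; rewrite unitmxE det_trig // big1 ?unitr1. Qed.

Section PrimePower.

Variable p : nat.
Hypothesis p_pr : prime p.

Lemma expnS_pred (v : nat) : (p ^ v.+1 = p.-1 * p ^ v + p ^ v)%N.
Proof. by rewrite expnS -{1}(prednK (prime_gt0 p_pr)) mulSn addnC. Qed.

Lemma totient_pexpS (k : nat) : totient (p ^ k.+1) = (p ^ k.+1 - p ^ k)%N.
Proof. by rewrite totient_pfactor // expnS_pred addnK. Qed.

Lemma pexp_leq (i j : nat) : (i <= j)%N -> (p ^ i <= p ^ j)%N.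
Proof. by move=> le_ij; rewrite leq_pexp2l ?prime_gt0. Qed.

Section PrimitiveRoot.

Variables (R : idomainType) (u : nat) (w : R).
Hypothesis w_prim : (p ^ u).-primitive_root w.

Lemma prim_root_pexp_eq1 (s : nat) : (w ^+ (p ^ s) == 1) = (u <= s)%N.
Proof. by rewrite -(prim_order_dvd w_prim) dvdn_Pexp2l ?prime_gt1. Qed.

Lemma sum_prim_root_pexp (n s : nat) : (u <= n)%N -> (s <= n)%N ->
  \sum_(q < p ^ (n - s)) w ^+ (q * p ^ s)
  = if (u <= s)%N then (p ^ (n - s))%:R else 0.
Proof.
move=> le_un le_sn; under eq_bigr do rewrite mulnC exprM.
rewrite -prim_root_pexp_eq1; have [/eqP w1 | w_neq1] := ifP.
  by rewrite w1 (eq_bigr (fun _ => 1)) ?sumr_const ?card_ord // => q _; rewrite expr1n.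
apply: sum_expr_eq0; last by rewrite w_neq1.
by apply/eqP; rewrite -exprM -expnD subnKC // prim_root_pexp_eq1.
Qed.

End PrimitiveRoot.

End PrimePower.

Definition ieval (w : algC) (N : nat) (c : nat -> int) : algC :=
  \sum_(k < N) (c k)%:~R * w ^+ k.

Definition delta_coef (k : nat) : nat -> int := fun t => (t == k)%:R.

Lemma eq_ieval (w : algC) (N : nat) (c d : nat -> int) :
  (forall k, (k < N)%N -> c k = d k) -> ieval w N c = ieval w N d.
Proof. by move=> eq_cd; apply: eq_bigr => k _; rewrite eq_cd. Qed.

Lemma ieval_widen (w : algC) (N N' : nat) (c : nat -> int) : (N <= N')%N ->
  ieval w N c = ieval w N' (fun k => if (k < N)%N then c k else 0).
Proof.
move=> le_NN'; rewrite /ieval (big_ord_widen _ (fun k => (c k)%:~R * w ^+ k) le_NN').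
by rewrite big_mkcond; apply: eq_bigr => k _; case: ifP; rewrite ?mul0r.
Qed.

Lemma ievalD (w : algC) (N : nat) (c d : nat -> int) :
  ieval w N (fun k => c k + d k) = ieval w N c + ieval w N d.
Proof. by rewrite -big_split; apply: eq_bigr => k _; rewrite intrD mulrDl. Qed.

Lemma ievalMn (w : algC) (N m : nat) (c : nat -> int) :
  ieval w N (fun k => c k * m%:Z) = ieval w N c * m%:R.
Proof. by rewrite mulr_suml; apply: eq_bigr => k _; rewrite intrM mulrAC. Qed.

Lemma ieval_delta (w : algC) (N k : nat) : (k < N)%N ->
  ieval w N (delta_coef k) = w ^+ k.
Proof.
move=> lt_k; rewrite /ieval (bigD1 (Ordinal lt_k)) //= big1 ?addr0 => [|t].
  by rewrite /delta_coef eqxx mul1r.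
by rewrite -val_eqE /delta_coef => /negPf /= ->; rewrite mul0r.
Qed.

Section PowerBasis.

Variables (N : nat) (w : algC).
Hypothesis w_prim : N.-primitive_root w.

(* The minimal polynomial of w is the N-th cyclotomic polynomial, of degree
   totient N, so it cannot divide a nonzero polynomial of smaller degree. *)
Lemma prim_root_ieval_eq0 (c : nat -> int) : ieval w (totient N) c = 0 ->
  forall j, (j < totient N)%N -> c j = 0.
Proof.
move=> c_root j lt_j; pose q : {poly rat} := \poly_(i < totient N) (c i)%:~R.
have q_root : root (map_poly ratr q) w.
  have -> : map_poly ratr q = \poly_(i < totient N) ((c i)%:~R : algC).
    apply/polyP => i; rewrite coef_map !coef_poly; case: ifP => _.
      exact: rmorph_int.
    exact: rmorph0.
  by rewrite /root horner_poly; apply/eqP.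
have [m [m_min _] m_dvd] := minCpolyP w.
have size_m : size m = (totient N).+1.
  rewrite -(@size_map_poly _ algC ratr) -m_min (minCpoly_cyclotomic w_prim).
  exact: size_cyclotomic.
have q0 : q = 0.
  apply/eqP; apply: contraTT (size_poly (totient N) (fun i => (c i)%:~R : rat)).
  by move=> q_neq0; rewrite -ltnNge -/q -size_m dvdp_leq // -m_dvd.
have := congr1 (fun r : {poly rat} => r`_j) q0.
by rewrite coef_poly lt_j coef0 => /eqP; rewrite intr_eq0 => /eqP.
Qed.

Lemma prim_root_ieval_inj (c c' : nat -> int) :
  ieval w (totient N) c = ieval w (totient N) c' ->
  forall j, (j < totient N)%N -> c j = c' j.
Proof.
move=> eq_cc' j lt_j; apply/eqP; rewrite -subr_eq0; apply/eqP.
apply: (@prim_root_ieval_eq0 (fun j => c j - c' j)) lt_j.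
rewrite /ieval; under eq_bigr do rewrite intrB mulrBl.
by rewrite sumrB -!/(ieval _ _ _) eq_cc' subrr.
Qed.

End PowerBasis.

Section Wedderburn.

Variables (p n : nat).
Hypothesis p_pr : prime p.

Let p_gt0 : (0 < p)%N := prime_gt0 p_pr.
Let p_gt1 : (1 < p)%N := prime_gt1 p_pr.

Definition quot_coef (a : nat -> int) (u m : nat) : int :=
  \sum_(q < p ^ (n - u)) a (m + q * p ^ u)%N.

(* For u = v + 1 the coefficient of zeta^((p-1) p^v + m), m < p^v, is
   moved onto the zeta^(q p^v + m), q < p - 1, with a minus sign. *)
Definition wedd_coef (a : nat -> int) (u j : nat) : int :=
  if u is v.+1 then quot_coef a u j - quot_coef a u (p.-1 * p ^ v + j %% p ^ v)%N
  else quot_coef a 0 j.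

Lemma ieval_quot (w : algC) (a : nat -> int) (u : nat) : (u <= n)%N ->
  w ^+ (p ^ u) = 1 -> ieval w (p ^ n) a = ieval w (p ^ u) (quot_coef a u).
Proof.
move=> le_un wpu1; have -> : (p ^ n = p ^ (n - u) * p ^ u)%N by rewrite -expnD subnK.
rewrite /ieval /quot_coef (big_split_ord_mul _ _ (fun k => (a k)%:~R * w ^+ k)).
under [RHS]eq_bigr do rewrite rmorph_sum mulr_suml.
rewrite exchange_big; apply: eq_bigr => q _; apply: eq_bigr => m _.
by rewrite exprD mulnC exprM wpu1 expr1n mulr1.
Qed.

Section PrimitiveRoot.

Variables (u : nat) (w : algC).
Hypotheses (le_un : (u <= n)%N) (w_prim : (p ^ u).-primitive_root w).

Lemma ieval_wedd_coef (a : nat -> int) :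
  ieval w (p ^ n) a = ieval w (totient (p ^ u)) (wedd_coef a u).
Proof.
rewrite (ieval_quot a le_un (prim_expr_order w_prim)) /wedd_coef.
case: u le_un w_prim => [|v] le_vn v_prim; first by rewrite expn0.
set F := quot_coef a v.+1; set P := (p ^ v)%N.
have sum_w : \sum_(q < p.-1) w ^+ (q * P) = - w ^+ (p.-1 * P).
  apply/eqP; rewrite -addr_eq0; apply/eqP.
  have := sum_prim_root_pexp p_pr v_prim (leqnn _) (leqnSn v).
  rewrite ltnn subSnn expn1 -/P -(big_mkord xpredT (fun q => w ^+ (q * P))).
  by rewrite -[in X in \sum_(0 <= q < X) _](prednK p_gt0) big_nat_recr //= big_mkord.
rewrite totient_pfactor //= -/P /ieval (expnS_pred p_pr) big_split_ord /=.
under [RHS]eq_bigr do rewrite intrB mulrBl.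
rewrite sumrB; congr (_ + _).
rewrite (big_split_ord_mul _ _ (fun j => (F (p.-1 * P + j %% P)%N)%:~R * w ^+ j)).
rewrite exchange_big -sumrN; apply: eq_bigr => m _.
under eq_bigr do rewrite modnDMl_small // exprD mulrA.
by rewrite -mulr_sumr sum_w mulrN opprK exprD mulrA mulrAC.
Qed.

Lemma wedd_coef_unique (a c : nat -> int) :
  ieval w (p ^ n) a = ieval w (totient (p ^ u)) c ->
  forall j, (j < totient (p ^ u))%N -> c j = wedd_coef a u j.
Proof. by rewrite ieval_wedd_coef => /esym/(prim_root_ieval_inj w_prim). Qed.

Lemma ieval_periodic (s : nat) (g : nat -> int) : (s <= n)%N ->
  ieval w (p ^ n) (fun k => g (k %% p ^ s)%N) =
  ieval w (p ^ s) g * (if (u <= s)%N then (p ^ (n - s))%:R else 0).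
Proof.
move=> le_sn; rewrite -(sum_prim_root_pexp p_pr w_prim le_un le_sn) /ieval.
have -> : (p ^ n = p ^ (n - s) * p ^ s)%N by rewrite -expnD subnK.
rewrite (big_split_ord_mul _ _ (fun k => (g (k %% p ^ s)%N)%:~R * w ^+ k)) mulr_sumr.
apply: eq_bigr => q _; rewrite mulr_suml; apply: eq_bigr => m _.
by rewrite modnDMl_small // exprD mulrA.
Qed.

End PrimitiveRoot.

(** * The congruences *)

Lemma quot_coefS (a : nat -> int) (v t : nat) : (v < n)%N ->
  quot_coef a v t = \sum_(q < p) quot_coef a v.+1 (t + q * p ^ v)%N.
Proof.
move=> lt_vn; rewrite /quot_coef.
have -> : (p ^ (n - v) = p ^ (n - v.+1) * p)%N by rewrite -expnSr subnSK.
rewrite (big_split_ord_mul _ _ (fun q => a (t + q * p ^ v)%N)) exchange_big /=.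
by apply: eq_bigr => q _; apply: eq_bigr => q' _; rewrite mulnDl addnA expnS mulnA.
Qed.

Lemma sum_wedd_coef_fiber (a : nat -> int) (v t : nat) :
  (v < n)%N -> (t < p ^ v)%N ->
  \sum_(k < p.-1) wedd_coef a v.+1 (t + k * p ^ v) =
  quot_coef a v t - p%:Z * quot_coef a v.+1 (t + p.-1 * p ^ v).
Proof.
move=> lt_vn lt_t; rewrite (quot_coefS a t lt_vn) /wedd_coef.
under eq_bigr do rewrite modnDMl_small //.
rewrite sumrB sumr_const card_ord.
rewrite -[in RHS](big_mkord xpredT (fun q => quot_coef a v.+1 (t + q * p ^ v))).
rewrite -[in X in \sum_(0 <= q < X) _](prednK p_gt0) big_nat_recr //= big_mkord.
have -> : p%:Z = (p.-1)%:Z + 1 by rewrite -PoszD addn1 prednK.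
by rewrite [(p.-1 * _ + t)%N]addnC -mulr_natl natz; ring.
Qed.

Lemma sum_wedd_coef_shift (a : nat -> int) (v s j : nat) :
  (v < n)%N -> (s <= v)%N -> (j < p ^ s)%N ->
  \sum_(1 <= k < p) wedd_coef a v.+1 (j + k * p ^ v - p ^ s) =
  quot_coef a v (j + p ^ v - p ^ s) - p%:Z * quot_coef a v.+1 (j + p ^ v.+1 - p ^ s).
Proof.
move=> lt_vn le_sv lt_j; have le_ps := pexp_leq p_pr le_sv.
set t := (j + p ^ v - p ^ s)%N; have lt_t : (t < p ^ v)%N by lia.
have shift k : (j + k.+1 * p ^ v - p ^ s = t + k * p ^ v)%N by rewrite mulSn; lia.
rewrite big_add1 big_mkord; under eq_bigr do rewrite shift.
rewrite sum_wedd_coef_fiber // (expnS_pred p_pr).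
by congr (_ - _ * quot_coef _ _ _); rewrite /t; set X := (p.-1 * p ^ v)%N; lia.
Qed.

(* Both halves of the inner sum of wedd_rhs are instances of
   sum_wedd_coef_shift, so the outer sum telescopes. *)
Lemma wedd_rhs_wedd_coef (a : nat -> int) (l j : nat) :
  (1 <= l <= n)%N -> (j < totient (p ^ (n - l)))%N ->
  (wedd_rhs p n (wedd_coef a) l j = wedd_coef a (n - l) j %[mod (p ^ l)%:Z])%Z.
Proof.
move=> /andP[l_gt0 le_ln] lt_j; have lt_jp := leq_trans lt_j (totient_leq _).
pose s := (n - l - 1)%N.
have lt_s : (j %% p ^ s < p ^ s)%N by rewrite ltn_pmod ?expn_gt0 ?p_gt0.
pose h i := quot_coef a (n - i) (j + p ^ (n - i) - p ^ (n - l))%N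
  - (if l == n then 0 else quot_coef a (n - i) (j %% p ^ s + p ^ (n - i) - p ^ s)%N).
have step (i : 'I_l) :
  \sum_(1 <= k < p)
    (wedd_coef a (n - i) (j + k * p ^ (n - 1 - i) - p ^ (n - l))
     - (if l == n then 0
        else wedd_coef a (n - i) (j %% p ^ s + k * p ^ (n - 1 - i) - p ^ s)))
  = h i.+1 - p%:Z * h i.
  have lt_il := ltn_ord i; rewrite /h.
  have lt_vn : (n - i.+1 < n)%N by lia.
  have le_lv : (n - l <= n - i.+1)%N by lia.
  have le_sv : (s <= n - i.+1)%N by rewrite /s; lia.
  have -> : (n - 1 - i = n - i.+1)%N by lia.
  have -> : (n - i = (n - i.+1).+1)%N by lia.
  case: eqP => _; last by rewrite sumrB !sum_wedd_coef_shift //; ring.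
  by under eq_bigr do rewrite subr0; rewrite sum_wedd_coef_shift // !subr0.
have pexpZ k : (p ^ k)%:Z = p%:Z ^+ k by rewrite -!natz natrX.
rewrite /wedd_rhs; under eq_bigr do rewrite step pexpZ.
rewrite telescope_pow -pexpZ addrC -mulrN mulrC modzMDl; congr (_ %% _)%Z.
rewrite /h addnK; case: eqP => [-> | /eqP l_neq_n]; first by rewrite subnn subr0.
rewrite (_ : (n - l = s.+1)%N) /=; last by rewrite /s; lia.
by rewrite (expnS_pred p_pr) addnA addnK addnC.
Qed.

Lemma shift_idx_lt_totient (v s j k : nat) :
  (s <= v)%N -> (j < p ^ s)%N -> (1 <= k < p)%N ->
  (j + k * p ^ v - p ^ s < totient (p ^ v.+1))%N.
Proof.
move=> le_sv lt_j /andP[k_gt0 lt_kp]; rewrite totient_pfactor //=.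
have : (p ^ s <= p ^ v)%N by apply: pexp_leq.
have : (p ^ v <= k * p ^ v <= p.-1 * p ^ v)%N.
  by rewrite leq_pmull // leq_mul2r -ltnS prednK // lt_kp orbT.
set X := (k * p ^ v)%N; set Y := (p.-1 * p ^ v)%N; lia.
Qed.

Lemma eq_wedd_rhs (x y : nat -> nat -> int) (l j : nat) :
  (1 <= l <= n)%N -> (j < totient (p ^ (n - l)))%N ->
  (forall u m, (n - l < u <= n)%N -> (m < totient (p ^ u))%N -> x u m = y u m) ->
  wedd_rhs p n x l j = wedd_rhs p n y l j.
Proof.
move=> /andP[l_gt0 le_ln] lt_j eq_xy; have lt_jp := leq_trans lt_j (totient_leq _).
have lt_s : (j %% p ^ (n - l - 1) < p ^ (n - l - 1))%N.
  by rewrite ltn_pmod ?expn_gt0 ?p_gt0.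
apply: eq_bigr => i _; have lt_il := ltn_ord i.
congr (_ * _); apply: eq_big_nat => k lt_k.
rewrite (_ : (n - i = (n - 1 - i).+1)%N); last by lia.
congr (_ - _); last case: eqP => // l_neq_n.
all: apply: eq_xy; [lia | apply: shift_idx_lt_totient => //; lia].
Qed.

(** * The image of the Wedderburn map *)

Section Roots.

Variable z : nat -> algC.
Hypothesis z_prim : forall i, (p ^ i).-primitive_root (z i).

Definition wedd_agree (x : nat -> nat -> int) (a : nat -> int) (s : nat) : Prop :=
  forall u, (s <= u <= n)%N -> ieval (z u) (p ^ n) a = ieval (z u) (totient (p ^ u)) (x u).

Lemma wedd_agree_coef (x : nat -> nat -> int) (a : nat -> int) (s : nat) :
  wedd_agree x a s -> forall u m, (s <= u <= n)%N -> (m < totient (p ^ u))%N ->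
  x u m = wedd_coef a u m.
Proof.
move=> agree u m le_u; have /andP[_ le_un] := le_u.
exact: (wedd_coef_unique le_un (z_prim u) (agree u le_u)).
Qed.

Lemma wedd_agree_congr (x : nat -> nat -> int) (a : nat -> int) (l j : nat) :
  wedd_agree x a (n - l).+1 -> (1 <= l <= n)%N -> (j < totient (p ^ (n - l)))%N ->
  (wedd_rhs p n x l j = wedd_coef a (n - l) j %[mod (p ^ l)%:Z])%Z.
Proof.
move=> /wedd_agree_coef agree le_ln lt_j.
by rewrite (eq_wedd_rhs le_ln lt_j agree) wedd_rhs_wedd_coef.
Qed.

Lemma wedd_image_congr (x : nat -> nat -> int) : in_wedderburn_image p n z x ->
  forall l j, (1 <= l <= n)%N -> (j < totient (p ^ (n - l)))%N ->
  (x (n - l)%N j = wedd_rhs p n x l j %[mod (p ^ l)%:Z])%Z.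
Proof.
move=> [a im_a] l j le_ln lt_j.
have agree s : wedd_agree x a s by move=> u /andP[_ le_un]; apply: im_a.
by rewrite (wedd_agree_coef (agree 0%N)) ?leq_subr // (wedd_agree_congr (agree _) le_ln lt_j).
Qed.

(* The correction term p^(n-s) g(k mod p^s) has image 0 in the levels above s,
   and p^(n-s) g in level s. *)
Lemma wedd_image_lift (x : nat -> nat -> int) (a : nat -> int) (s : nat) :
  (s <= n)%N -> wedd_agree x a s.+1 ->
  (forall j, (j < totient (p ^ s))%N -> ((p ^ (n - s))%:Z %| x s j - wedd_coef a s j)%Z) ->
  exists a' : nat -> int, wedd_agree x a' s.
Proof.
move=> le_sn agree dvd_x.
pose d j := ((x s j - wedd_coef a s j) %/ (p ^ (n - s))%:Z)%Z.
pose g m := if (m < totient (p ^ s))%N then d m else 0.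
exists (fun k => a k + g (k %% p ^ s)%N) => u /andP[le_su le_un].
rewrite ievalD (ieval_periodic le_un (z_prim u) g le_sn).
case: leqP => [le_us | lt_su]; last by rewrite mulr0 addr0 agree ?lt_su.
have -> : u = s by apply/eqP; rewrite eqn_leq le_us.
rewrite (ieval_wedd_coef le_sn (z_prim s)) /g -ieval_widen ?totient_leq //.
rewrite -ievalMn -ievalD; apply: eq_ieval => j lt_j.
by rewrite /d divzK ?dvd_x // addrC subrK.
Qed.

Lemma congr_wedd_image (x : nat -> nat -> int) :
  (forall l j, (1 <= l <= n)%N -> (j < totient (p ^ (n - l)))%N ->
     (x (n - l)%N j = wedd_rhs p n x l j %[mod (p ^ l)%:Z])%Z) ->
  in_wedderburn_image p n z x.
Proof.
move=> x_congr.
suff agree_from m : (m <= n.+1)%N -> exists a, wedd_agree x a (n.+1 - m).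
  by have [a agree] := agree_from n.+1 (leqnn _); exists a => u le_un; apply: agree; rewrite subnn.
elim: m => [|m IHm] lt_mn; first by exists (fun=> 0) => u; lia.
have le_mn : (m <= n)%N := lt_mn.
have [a agree] := IHm (ltnW lt_mn); rewrite subSn // in agree.
apply: (wedd_image_lift (leq_subr _ _) agree) => j lt_j.
rewrite subKn //; have [-> | m_gt0] := posnP m; first by rewrite dvd1z.
have le_m : (1 <= m <= n)%N by rewrite m_gt0.
by rewrite -eqz_mod_dvd (x_congr _ _ le_m lt_j) (wedd_agree_congr agree le_m lt_j).
Qed.

(** * The elementary divisors *)

(* Row r stands for zeta_{p^i}^j with i = row_level r and j = row_index r:
   the rows of level i form the block [p^n - p^i, p^n - p^i + phi(p^i)),
   so the levels decrease from n (first rows) to 0 (last row). *)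
Definition row_level (r : nat) : nat := up_log p (p ^ n - r).

Definition row_index (r : nat) : nat := (r - (p ^ n - p ^ row_level r))%N.

Lemma row_levelP (r : nat) : (r < p ^ n)%N ->
  [/\ (row_level r <= n)%N, (p ^ n - p ^ row_level r <= r)%N
    & (row_index r < totient (p ^ row_level r))%N].
Proof.
move=> lt_r; rewrite /row_index /row_level; set m := (p ^ n - r)%N.
have le_m : (m <= p ^ n)%N by rewrite leq_subr.
have [le_m1 | lt_1m] := leqP m 1.
  by rewrite (_ : m = 1%N) ?up_log1 ?expn0 ?totient1; [split; lia | lia].
have := up_log_min p_gt1 le_m; have := up_log_bounds p_gt1 lt_1m.
case: (up_log p m) => [|v] /=; first lia.
by rewrite totient_pexpS //; have := pexp_leq p_pr (leqnSn v); split; lia.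
Qed.

Lemma row_decomp (r : nat) : (r < p ^ n)%N ->
  r = (p ^ n - p ^ row_level r + row_index r)%N.
Proof. by case/row_levelP=> _ le_r _; rewrite /row_index subnKC. Qed.

Lemma row_inj (r r' : nat) : (r < p ^ n)%N -> (r' < p ^ n)%N ->
  row_level r = row_level r' -> row_index r = row_index r' -> r = r'.
Proof.
by move=> lt_r lt_r' eq_lev eq_idx; rewrite (row_decomp lt_r) (row_decomp lt_r') eq_lev eq_idx.
Qed.

Lemma row_level_block (i j : nat) : (i <= n)%N -> (j < totient (p ^ i))%N ->
  row_level (p ^ n - p ^ i + j) = i /\ row_index (p ^ n - p ^ i + j) = j.
Proof.
move=> le_in lt_j; have le_pi := pexp_leq p_pr le_in.
suff lev_r : row_level (p ^ n - p ^ i + j) = i by rewrite /row_index lev_r addKn.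
rewrite /row_level (_ : (p ^ n - (p ^ n - p ^ i + j) = p ^ i - j)%N); last first.
  by have := totient_leq (p ^ i); lia.
case: i le_in lt_j le_pi => [|v] le_vn lt_j le_pv.
  by move: lt_j; rewrite expn0 totient1 ltnS leqn0 => /eqP ->; rewrite up_log1.
apply: (up_log_eq p_gt1); move: lt_j; rewrite totient_pexpS //.
by have := pexp_leq p_pr (leqnSn v); lia.
Qed.

Lemma row_level_range (i r : nat) : (i <= n)%N ->
  (p ^ n - p ^ i <= r < p ^ n - p ^ i + totient (p ^ i))%N -> row_level r = i.
Proof.
move=> le_in /andP[le_r lt_r].
have lt_j : (r - (p ^ n - p ^ i) < totient (p ^ i))%N by lia.
by have [<- _] := row_level_block le_in lt_j; rewrite subnKC.
Qed.

Lemma row_level_anti (r r' : nat) : (r <= r')%N -> (row_level r' <= row_level r)%N.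
Proof. by move=> le_rr'; apply/leq_up_log/leq_sub2l. Qed.

Lemma row_level_eq (r i : nat) : (r < p ^ n)%N -> (i <= n)%N ->
  (row_level r == i) = (p ^ n - p ^ i <= r < p ^ n - p ^ i + totient (p ^ i))%N.
Proof.
move=> lt_r le_in; apply/eqP/idP => [lev_r | /(row_level_range le_in)//].
have [_ _ lt_idx] := row_levelP lt_r.
by rewrite (row_decomp lt_r) -lev_r; move: lt_idx; rewrite lev_r; lia.
Qed.

Lemma sum_row_level (V : nmodType) (F : nat -> V) (i : nat) : (i <= n)%N ->
  \sum_(r < p ^ n | row_level r == i) F (row_index r) = \sum_(j < totient (p ^ i)) F j.
Proof.
move=> le_in; set off := (p ^ n - p ^ i)%N.
have le_block : (off + totient (p ^ i) <= p ^ n)%N.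
  by have := totient_leq (p ^ i); have := pexp_leq p_pr le_in; lia.
transitivity (\sum_(off <= r < off + totient (p ^ i)) F (row_index r)); last first.
  rewrite -{1}[off]add0n big_addn addKn big_mkord; apply: eq_bigr => j _.
  by have [_ idx_j] := row_level_block le_in (ltn_ord j); rewrite addnC idx_j.
rewrite (big_nat_widen _ _ _ xpredT _ le_block) (big_nat_widenl _ _ _ _ _ (leq0n off)).
rewrite -(big_mkord (fun r => row_level r == i) (fun r => F (row_index r))).
rewrite big_nat_cond [RHS]big_nat_cond; apply: eq_bigl => r.
by case: ltnP => //= lt_r; rewrite row_level_eq // andbC.
Qed.

Lemma modn_row_block (i t : nat) : (i <= n)%N -> (t < p ^ i)%N ->
  ((p ^ n - p ^ i + t) %% p ^ i = t)%N.
Proof.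
move=> le_in lt_t; rewrite -(subnK le_in) expnD -{2}[(p ^ i)%N]mul1n -mulnBl.
by rewrite modnMDl modn_small.
Qed.

Lemma map_row_level_block (T : eqType) (f : nat -> T) (i : nat) : (i <= n)%N ->
  [seq f (row_level r) | r <- iota (p ^ n - p ^ i) (totient (p ^ i))] =
  nseq (totient (p ^ i)) (f i).
Proof.
move=> le_in; rewrite -[X in nseq X _](size_iota (p ^ n - p ^ i)).
rewrite -(size_map (fun r => f (row_level r))); apply/all_pred1P/allP => y /mapP[r].
by rewrite mem_iota => /(row_level_range le_in) lev_r ->; rewrite /= lev_r eqxx.
Qed.

Lemma expected_divisorsE :
  expected_divisors p n = [seq (p ^ (n - row_level r))%:Z | r <- iota 0 (p ^ n)].
Proof.
pose f t := (p ^ (n - t))%:Z.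
have blocks m : (m <= n)%N ->
    flatten [seq nseq (totient (p ^ (n - i))) (p ^ i)%:Z | i <- iota 0 m.+1] =
    [seq f (row_level r) | r <- iota 0 (p ^ n - p ^ (n - m) + totient (p ^ (n - m)))].
  elim: m => [|m IHm] le_mn.
    rewrite /= cats0 subn0 subnn add0n -[X in iota X _](subnn (p ^ n)%N).
    by rewrite map_row_level_block // /f subnn.
  rewrite -addn1 iotaD map_cat flatten_cat IHm 1?ltnW // add0n /= cats0.
  have E : (n - m = (n - m.+1).+1)%N by lia.
  have le_pm : (p ^ (n - m.+1) <= p ^ (n - m) <= p ^ n)%N.
    by rewrite !(pexp_leq p_pr) ?leq_subr //; lia.
  rewrite [in X in iota 0 X]E totient_pexpS // -E.
  rewrite (_ : (_ + (_ - _) = p ^ n - p ^ (n - m.+1))%N); last lia.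
  by rewrite iotaD map_cat map_row_level_block ?leq_subr // /f subKn.
by rewrite /expected_divisors blocks // subnn expn0 totient1 subnK ?expn_gt0 ?p_gt0.
Qed.

Lemma size_expected_divisors : size (expected_divisors p n) = (p ^ n)%N.
Proof. by rewrite expected_divisorsE size_map size_iota. Qed.

Lemma nth_expected_divisors (r : nat) : (r < p ^ n)%N ->
  (expected_divisors p n)`_r = (p ^ (n - row_level r))%:Z.
Proof.
by move=> lt_r; rewrite expected_divisorsE (nth_map 0%N) ?size_iota // nth_iota.
Qed.

Lemma sorted_expected_divisors : sorted dvdz (expected_divisors p n).
Proof.
rewrite expected_divisorsE sorted_map; apply: sub_sorted (iota_sorted 0 _) => r r' le_rr'.
by have := row_level_anti le_rr'; rewrite /= /dvdz /= dvdn_Pexp2l //; lia.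
Qed.

Section Level.

Variable t : nat.
Hypothesis le_tn : (t <= n)%N.

Lemma wedd_coef_delta (j j' : nat) :
  (j < totient (p ^ t))%N -> (j' < totient (p ^ t))%N ->
  wedd_coef (delta_coef j') t j = delta_coef j' j.
Proof.
move=> lt_j lt_j'; apply/esym/(wedd_coef_unique le_tn (z_prim t) _ lt_j).
have lt_j'p : (j' < p ^ n)%N.
  exact: leq_trans lt_j' (leq_trans (totient_leq _) (pexp_leq p_pr le_tn)).
by rewrite !ieval_delta.
Qed.

Lemma wedd_coef_sum_delta (a : nat -> int) (j : nat) : (j < totient (p ^ t))%N ->
  \sum_(k < p ^ n) wedd_coef (delta_coef k) t j * a k = wedd_coef a t j.
Proof.
pose c i := \sum_(k < p ^ n) wedd_coef (delta_coef k) t i * a k.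
apply: (wedd_coef_unique le_tn (z_prim t) (c := c)); rewrite /ieval /c.
under [RHS]eq_bigr do rewrite rmorph_sum mulr_suml.
rewrite exchange_big; apply: eq_bigr => k _.
rewrite -(ieval_delta (z t) (ltn_ord k)) (ieval_wedd_coef le_tn (z_prim t)).
by rewrite mulr_sumr; apply: eq_bigr => i _; rewrite rmorphM /= mulrA [_ * (a k)%:~R]mulrC.
Qed.

Lemma wedd_coef_periodic (s j j' : nat) : (s <= n)%N -> (j' < p ^ s)%N ->
  (j < totient (p ^ t))%N ->
  wedd_coef (fun k => delta_coef j' (k %% p ^ s)%N) t j
  = (if (t <= s)%N then wedd_coef (delta_coef j') t j else 0) * (p ^ (n - s))%:Z.
Proof.
move=> le_sn lt_j' lt_j.
pose c i := (if (t <= s)%N then wedd_coef (delta_coef j') t i else 0) * (p ^ (n - s))%:Z.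
apply/esym/(wedd_coef_unique le_tn (z_prim t) (c := c) _ lt_j).
rewrite (ieval_periodic le_tn (z_prim t) _ le_sn) ievalMn ieval_delta //.
case: ifP => _; last by rewrite mulr0 /ieval big1 ?mul0r // => i _; rewrite mul0r.
rewrite -(ieval_wedd_coef le_tn (z_prim t)) ieval_delta //.
exact: leq_trans lt_j' (pexp_leq p_pr le_sn).
Qed.

End Level.

Definition row_pos (r : 'I_(p ^ n)) : nat * nat := (row_level r, row_index r).

Definition wedd_mx : 'M[int]_(p ^ n) :=
  \matrix_(r, k) wedd_coef (delta_coef k) (row_level r) (row_index r).

Lemma wedderburn_matrix_wedd_mx : wedderburn_matrix p n z row_pos wedd_mx.
Proof.
split.
- move=> r r' [eq_lev eq_idx]; apply: val_inj.
  exact: row_inj (ltn_ord r) (ltn_ord r') eq_lev eq_idx.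
- by move=> r; have [le_lev _ lt_idx] := row_levelP (ltn_ord r).
- move=> i j le_in lt_j; have [lev_r idx_r] := row_level_block le_in lt_j.
  have lt_r : (p ^ n - p ^ i + j < p ^ n)%N.
    have : (0 < p ^ i)%N by rewrite expn_gt0 p_gt0.
    by have := totient_leq (p ^ i); have := pexp_leq p_pr le_in; lia.
  by exists (Ordinal lt_r); rewrite /row_pos /= lev_r idx_r.
- move=> i k le_in; under eq_bigr => r /eqP /= lev_r do rewrite mxE lev_r.
  rewrite (sum_row_level (fun j => (wedd_coef (delta_coef k) i j)%:~R * z i ^+ j) le_in).
  by rewrite -/(ieval _ _ _) -(ieval_wedd_coef le_in (z_prim i)) ieval_delta.
Qed.

(* Column r is the indicator of the residue class of j modulo p^i, i.e. the
   element c^j (1 + c^(p^i) + c^(2 p^i) + ...), for (i, j) = row_pos r. *)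
Definition periodic_mx : 'M[int]_(p ^ n) :=
  \matrix_(k, r) delta_coef (row_index r) (k %% p ^ row_level r)%N.

Definition wedd_trig_mx : 'M[int]_(p ^ n) :=
  \matrix_(r, r') if (row_level r <= row_level r')%N
                  then wedd_coef (delta_coef (row_index r')) (row_level r) (row_index r)
                  else 0.

Lemma periodic_mx_unit : periodic_mx \in unitmx.
Proof.
rewrite -unitmx_tr; apply: unitmx_unitrig => [|r]; last first.
  have [le_lev _ lt_idx] := row_levelP (ltn_ord r).
  rewrite !mxE [X in (X %% _)%N](row_decomp (ltn_ord r)) modn_row_block //.
    by rewrite /delta_coef eqxx.
  exact: leq_trans lt_idx (totient_leq _).
apply/is_trig_mxP => r k lt_rk; rewrite !mxE.
have [le_lev le_off _] := row_levelP (ltn_ord r).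
have lt_k : (k - (p ^ n - p ^ row_level r) < p ^ row_level r)%N.
  by have := ltn_ord k; lia.
rewrite -{1}(subnKC (leq_trans le_off (ltnW lt_rk))) modn_row_block //.
by rewrite /delta_coef /row_index; case: eqP => //; lia.
Qed.

Lemma wedd_trig_mx_unit : wedd_trig_mx \in unitmx.
Proof.
apply: unitmx_unitrig => [|r]; last first.
  have [le_lev _ lt_idx] := row_levelP (ltn_ord r).
  by rewrite mxE leqnn wedd_coef_delta // /delta_coef eqxx.
apply/is_trig_mxP => r r' lt_rr'; rewrite mxE.
have le_lev := row_level_anti (ltnW lt_rr'); case: ifP => // ge_lev.
have eq_lev : row_level r' = row_level r by apply/eqP; rewrite eqn_leq le_lev ge_lev.
have [le_lev_n _ lt_idx] := row_levelP (ltn_ord r).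
have [_ _ lt_idx'] := row_levelP (ltn_ord r'); rewrite eq_lev in lt_idx'.
rewrite wedd_coef_delta // /delta_coef; case: eqP => // eq_idx.
by rewrite (row_inj (ltn_ord r) (ltn_ord r') (esym eq_lev) eq_idx) ltnn in lt_rr'.
Qed.

Lemma wedd_mx_periodic :
  wedd_mx *m periodic_mx =
  wedd_trig_mx *m \matrix_(i, j) ((expected_divisors p n)`_i *+ (i == j :> nat)).
Proof.
apply/matrixP => r r'; rewrite !mxE [RHS](bigD1 r') //= [X in _ = _ + X]big1 => [|s].
  rewrite !mxE eqxx mulr1n addr0 nth_expected_divisors //.
  have [le_lev _ lt_idx] := row_levelP (ltn_ord r).
  have [le_lev' _ lt_idx'] := row_levelP (ltn_ord r').
  under eq_bigr do rewrite !mxE.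
  pose a k := delta_coef (row_index r') (k %% p ^ row_level r')%N.
  rewrite (wedd_coef_sum_delta le_lev a lt_idx) wedd_coef_periodic //.
  exact: leq_trans lt_idx' (totient_leq _).
by rewrite mxE -val_eqE => /negPf ->; rewrite mulr0n mulr0.
Qed.

Lemma smith_wedd_mx : smith_diagonal wedd_mx (expected_divisors p n).
Proof.
split; first exact: size_expected_divisors.
split; first exact: sorted_expected_divisors.
exists wedd_trig_mx; first exact: wedd_trig_mx_unit.
exists (invmx periodic_mx); first by rewrite unitmx_inv periodic_mx_unit.
by rewrite -wedd_mx_periodic mulmxK // periodic_mx_unit.
Qed.

End Roots.

End Wedderburn.

Lemma exists_ieval_totient (p i N : nat) (w : algC) (a : nat -> int) :
  prime p -> (p ^ i).-primitive_root w ->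
  exists c, ieval w N a = ieval w (totient (p ^ i)) c.
Proof.
move=> p_pr w_prim; pose m := maxn i N.
have le_Npm : (N <= p ^ m)%N.
  exact: leq_trans (ltnW (ltn_expl N (prime_gt1 p_pr))) (pexp_leq p_pr (leq_maxr i N)).
exists (wedd_coef p m (fun k => if (k < N)%N then a k else 0) i).
by rewrite (ieval_widen _ _ le_Npm) (ieval_wedd_coef p_pr (leq_maxl i N) w_prim).
Qed.

Theorem theorem5p14 (p n : nat) (z : nat -> algC) :
  prime p ->
  (forall i, (p ^ i).-primitive_root (z i)) ->
  (* unique representation in Z[zeta_{p^i}] w.r.t. the basis zeta^j, j < phi(p^i) *)
  (forall i (N : nat) (a : nat -> int), exists c : nat -> int,
      \sum_(k < N) (a k)%:~R * z i ^+ k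
      = \sum_(j < totient (p ^ i)) (c j)%:~R * z i ^+ j) /\
  (forall i (c : nat -> int),
      \sum_(j < totient (p ^ i)) (c j)%:~R * z i ^+ j = 0 ->
      forall j, (j < totient (p ^ i))%N -> c j = 0) /\
  (* image characterisation *)
  (forall x : nat -> nat -> int,
      in_wedderburn_image p n z x <->
      (forall l j, (1 <= l <= n)%N -> (j < totient (p ^ (n - l)))%N ->
         (x (n - l)%N j = wedd_rhs p n x l j %[mod (p ^ l)%:Z])%Z)) /\
  (* elementary divisors *)
  (exists (e : 'I_(p ^ n) -> nat * nat) (M : 'M[int]_(p ^ n)) (d : seq int),
      [/\ wedderburn_matrix p n z e M, smith_diagonal M d &
          perm_eq d (expected_divisors p n)]).
Proof.
move=> p_pr z_prim; split; [|split; [|split]].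
- by move=> i N a; apply: exists_ieval_totient p_pr (z_prim i).
- by move=> i; apply: prim_root_ieval_eq0 (z_prim i).
- by move=> x; split; [apply: wedd_image_congr | apply: congr_wedd_image].
- exists (@row_pos p n), (wedd_mx p n), (expected_divisors p n).
  by split; [apply: wedderburn_matrix_wedd_mx | apply: smith_wedd_mx | apply: perm_refl].
Qed.
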